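(* Let $n\ge4$ and let $\mathcal{U}\subseteq\mathbb{P}_2(n)$ be an equidistant linear code with constant distance $2$. If $|\mathcal{U}|=2^{n-1}$, then either $\mathcal{U}^{*}$ is a sunflower, or $n=4$ and $\mathcal{U}^{*}=\{Y\in\mathbb{G}_2(4,2): Y\subset T\}$ for some $T\in\mathbb{G}_2(4,3)$.
   Context: $\mathbb{P}_q(n)$ denotes the set of all subspaces of $\mathbb{F}_q^n$ and $\mathbb{G}_q(n,k)$ the set of $k$-dimensional subspaces. For subspaces $X,Y$ the subspace distance is $d_S(X,Y)=\dim X+\dim Y-2\dim(X\cap Y)$. A linear code in $\mathbb{P}_q(n)$ is a subset $\mathcal{U}\subseteq\mathbb{P}_q(n)$ with $\{0\}\in\mathcal{U}$ for which there exists a map $\boxplus:\mathcal{U}\times\mathcal{U}\to\mathcal{U}$ such that (i) $(\mathcal{U},\boxplus)$ is an abelian group; (ii) its identity element is $\{0\}$; (iii) $X\boxplus X=\{0\}$ for all $X\in\mathcal{U}$; (iv) $d_S(Y_1\boxplus X,Y_2\boxplus X)=d_S(Y_1,Y_2)$ for all $Y_1,Y_2,X\in\mathcal{U}$. Its nontrivial part is $\mathcal{U}^*=\mathcal{U}\setminus\{\{0\}\}$. It is equidistant with constant distance $r$ if $d_S(X,Y)=r$ for all distinct $X,Y\in\mathcal{U}$. A family $\mathbb{S}\subseteq\mathbb{G}_q(n,k)$ is a sunflower (with center $C\in\mathbb{G}_q(n,t)$) if $X\cap Y=C$ for all distinct $X,Y\in\mathbb{S}$. *)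

(* Subspaces of F_q^n are {vspace 'rV['F_q]_n}. *)
From HB Require Import structures.
From mathcomp Require Import all_boot all_order all_algebra all_field.
Set Implicit Arguments. Unset Strict Implicit. Unset Printing Implicit Defensive.
Import GRing.Theory.
Local Open Scope ring_scope.

Section Defs.
Variables (F : fieldType) (vT : vectType F).

Definition dS (X Y : {vspace vT}) : nat :=
  (\dim X + \dim Y - 2 * \dim (X :&: Y))%N.

Definition linear_code (U : seq {vspace vT}) : Prop :=
  uniq U /\ (0%VS \in U) /\
  exists op : {vspace vT} -> {vspace vT} -> {vspace vT},
    (forall X Y, X \in U -> Y \in U -> op X Y \in U) /\
    [/\
        (forall X Y Z, X \in U -> Y \in U -> Z \in U ->
           op X (op Y Z) = op (op X Y) Z),
        (forall X Y, X \in U -> Y \in U -> op X Y = op Y X),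
        (forall X, X \in U -> op 0%VS X = X /\ op X 0%VS = X),
        (forall X, X \in U -> op X X = 0%VS) &
        (forall Y1 Y2 X, Y1 \in U -> Y2 \in U -> X \in U ->
           dS (op Y1 X) (op Y2 X) = dS Y1 Y2)].

Definition nontriv (U : seq {vspace vT}) : seq {vspace vT} :=
  [seq X <- U | X != 0%VS].

Definition equidistant (U : seq {vspace vT}) (r : nat) : Prop :=
  forall X Y, X \in U -> Y \in U -> X != Y -> dS X Y = r.

Definition sunflower (S : seq {vspace vT}) : Prop :=
  exists (k t : nat) (C : {vspace vT}),
    [/\ \dim C = t,
        (forall X, X \in S -> \dim X = k) &
        (forall X Y, X \in S -> Y \in S -> X != Y -> (X :&: Y)%VS = C)].

End Defs.

(* Every nontrivial codeword is at distance 2 from {0}, hence a plane, and two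
   distinct ones meet in a line.  Planes pairwise meeting in lines either all
   contain the line A :&: B spanned by two of them, giving a sunflower, or all
   lie in the 3-space A + B.  Over F_2 a 3-space has only 2^3 - 1 = 7 planes,
   while |U^*| = 2^(n-1) - 1 >= 7; so n = 4 and U^* consists of all planes of
   A + B. *)

From HB Require Import structures.
From mathcomp Require Import all_boot all_order all_algebra all_field.
From mathcomp Require Import zify.
Set Implicit Arguments.
Unset Strict Implicit.
Unset Printing Implicit Defensive.

Import GRing.Theory.
Local Open Scope ring_scope.

Section Planes.
Variables (F : fieldType) (vT : vectType F).
Implicit Types (L T X Y Z A B C : {vspace vT}).

Lemma eq_line [L1 L2] : \dim L1 = 1%N -> \dim L2 = 1%N -> (L1 <= L2)%VS -> L1 = L2.
Proof. by move=> d1 d2 sL; apply/eqP; rewrite eqEdim sL d1 d2. Qed.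

Lemma addv_lines [L1 L2 X] : \dim X = 2%N -> \dim L1 = 1%N -> \dim L2 = 1%N ->
  L1 != L2 -> (L1 <= X)%VS -> (L2 <= X)%VS -> (L1 + L2)%VS = X.
Proof.
move=> dX d1 d2 L12 s1 s2; apply/eqP; rewrite eqEdim subv_add s1 s2 dX.
have := dimv_sum_cap L1 L2; rewrite d1 d2.
have [->|dI _] := posnP (\dim (L1 :&: L2)); first by rewrite addn0 => ->.
have dI1 : \dim (L1 :&: L2) = 1%N by apply/anti_leq; rewrite dI -d1 dimvS ?capvSl.
by case/eqP: L12; rewrite -(eq_line dI1 d1 (capvSl _ _)) (eq_line dI1 d2 (capvSr _ _)).
Qed.

Section AdjacentPlanes.
Variable S : seq {vspace vT}.
Hypothesis dimS : {in S, forall X, \dim X = 2%N}.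
Hypothesis dim_capS : {in S &, forall X Y, X != Y -> \dim (X :&: Y) = 1%N}.

Lemma capS_line [X Y L] : X \in S -> Y \in S -> X != Y -> \dim L = 1%N ->
  (L <= X)%VS -> (L <= Y)%VS -> (X :&: Y)%VS = L.
Proof. by move=> XS YS XY dL LX LY; symmetry; apply: eq_line; rewrite ?dim_capS ?subv_cap ?LX. Qed.

Lemma dim_addS A B : A \in S -> B \in S -> A != B -> \dim (A + B) = 3%N.
Proof.
move=> AS BS AB; apply/eqP; rewrite -(eqn_add2r (\dim (A :&: B))) dimv_sum_cap.
by rewrite dimS ?dim_capS ?dimS.
Qed.

Lemma subS_addv [A B C] : A \in S -> B \in S -> C \in S -> A != B ->
  ~~ (A :&: B <= C)%VS -> (C <= A + B)%VS.
Proof.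
move=> AS BS CS AB ABC.
have [CA CB] : C != A /\ C != B.
  by split; apply: contraNneq ABC => ->; rewrite ?capvSl ?capvSr.
have dCA : \dim (C :&: A) = 1%N by rewrite dim_capS.
have dCB : \dim (C :&: B) = 1%N by rewrite dim_capS.
have CAB : (C :&: A)%VS != (C :&: B)%VS.
  apply: contraNneq ABC => eCAB.
  by rewrite (capS_line AS BS AB dCA) ?capvSl ?capvSr // eCAB capvSr.
rewrite -(addv_lines (dimS CS) dCA dCB CAB) ?capvSl //.
by rewrite addvS ?capvSr.
Qed.

Lemma subS_addv_all [A B C] : A \in S -> B \in S -> C \in S -> A != B ->
  ~~ (A :&: B <= C)%VS -> {in S, forall Z, (Z <= A + B)%VS}.
Proof.
move=> AS BS CS AB ABC Z ZS.
have [ABZ|] := boolP (A :&: B <= Z)%VS; last exact: subS_addv.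
have CAB : (C <= A + B)%VS by apply: subS_addv.
have [-> |ZA] := eqVneq Z A; first exact: addvSl.
have AC : A != C by apply: contraNneq ABC => <-; rewrite capvSl.
apply: subv_trans (_ : A + C <= A + B)%VS; last by rewrite subv_add addvSl.
apply: subS_addv => //; apply: contraNN ABC => ACZ.
have dAB := dim_capS AS BS AB; have dAC := dim_capS AS CS AC.
rewrite -(capS_line ZS AS ZA dAB ABZ (capvSl _ _)).
by rewrite (capS_line ZS AS ZA dAC ACZ (capvSl _ _)) capvSr.
Qed.

Lemma sunflowerS_or_subv_addv A B : A \in S -> B \in S -> A != B ->
  {in S &, forall X Y, X != Y -> (X :&: Y)%VS = (A :&: B)%VS} \/
  {in S, forall Z, (Z <= A + B)%VS}.
Proof.
move=> AS BS AB; have dAB := dim_capS AS BS AB.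
have [ABS|/allPn[C CS ABC]] := boolP (all (fun Z => A :&: B <= Z)%VS S).
  by left=> X Y XS YS XY; apply: capS_line; rewrite ?(allP ABS).
by right; apply: (subS_addv_all AS BS CS AB ABC).
Qed.

End AdjacentPlanes.

Definition hyperplane (T Y : {vspace vT}) : bool :=
  (Y <= T)%VS && ((\dim Y).+1 == \dim T).

Lemma addv_hyperplane_line T Y x : hyperplane T Y -> x \in T -> x \notin Y ->
  (Y + <[x]>)%VS = T.
Proof.
case/andP=> YT /eqP dT xT xY; apply/eqP; rewrite eqEdim subv_add YT -memvE xT -dT /=.
rewrite (ltn_leqif (dimv_leqif_eq (addvSl Y <[x]>))).
by apply: contraNN xY => /eqP ->; apply: (subvP (addvSr _ _)); rewrite memv_line.
Qed.

Lemma vbasis_ind (P : vT -> Prop) T : P 0 ->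
  {in T &, forall x y, P x -> P y -> P (x + y)} ->
  (forall c (i : 'I_(\dim T)), P (c *: (vbasis T)`_i)) ->
  {in T, forall v, P v}.
Proof.
move=> P0 PD PZ v /coord_vbasis ->.
suff [] : (\sum_(i < \dim T) coord (vbasis T) i v *: (vbasis T)`_i \in T) /\
  P (\sum_(i < \dim T) coord (vbasis T) i v *: (vbasis T)`_i) by [].
apply: (big_ind (fun w => w \in T /\ P w)); first by split; rewrite ?mem0v.
  by move=> x y [xT Px] [yT Py]; split; [rewrite memvD | apply: PD].
by move=> i _; split; rewrite // memvZ // vbasis_mem // mem_nth // size_tuple.
Qed.

End Planes.

Section HyperplanesF2.
Variable vT : vectType 'F_2.
Implicit Types (T X Y : {vspace vT}).

Lemma F2_cases (c : 'F_2) : c = 0 \/ c = 1.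
Proof. by case: c => [[|[|//]]] ? /=; [left | right]; apply: val_inj. Qed.

Lemma addrr_F2 (x : vT) : x + x = 0.
Proof. by rewrite -mulr2n -scaler_nat pchar_Fp_0 ?scale0r. Qed.

Lemma memvD_hyperplane T Y x y : hyperplane T Y -> x \in T -> y \in T ->
  (x + y \in Y) = ((x \in Y) == (y \in Y)).
Proof.
move=> hY xT yT; have YT : (Y <= T)%VS by case/andP: hY.
have [xY|xY] := boolP (x \in Y); have [yY|yY] := boolP (y \in Y) => /=.
- by rewrite memvD.
- by apply: contraNF yY => xyY; rewrite -(addKr x y) memvD ?memvN.
- by apply: contraNF xY => xyY; rewrite -(addrK y x) memvB.
move: yY yT; rewrite -(addv_hyperplane_line hY xT xY).
move=> yY /memv_addP[u uY [_ /vlineP[c ->] yE]]; rewrite {y}yE in yY *.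
have [c0|c1] := F2_cases c; first by rewrite c0 scale0r addr0 uY in yY.
by rewrite c1 scale1r addrCA addrr_F2 addr0 uY.
Qed.

(* Y has index 2 in T, so membership in Y is additive on T and a hyperplane is
   determined by the basis vectors of T it contains, which cannot be all of them. *)
Definition basis_pattern T Y : {ffun 'I_(\dim T) -> bool} :=
  [ffun i : 'I_(\dim T) => (vbasis T)`_i \in Y].

Lemma basis_pattern_inj T : {in hyperplane T &, injective (basis_pattern T)}.
Proof.
move=> X Y hX hY eXY.
have XYT : {in T, forall v, (v \in X) = (v \in Y)}.
  apply: vbasis_ind => [|x y xT yT eX eY|c i]; first by rewrite !mem0v.
    by rewrite (memvD_hyperplane hX) ?(memvD_hyperplane hY) ?eX ?eY.
  have /ffunP/(_ i) := eXY; rewrite !ffunE.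
  by have [->|->] := F2_cases c; rewrite ?scale0r ?mem0v ?scale1r.
have [XT YT] : (X <= T)%VS /\ (Y <= T)%VS by case/andP: hX; case/andP: hY.
apply: subv_anti; apply/andP; split; apply/subvP => v vXY.
  by rewrite -XYT ?(subvP XT).
by rewrite XYT ?(subvP YT).
Qed.

Lemma basis_pattern_neq_true T Y : hyperplane T Y -> basis_pattern T Y != [ffun=> true].
Proof.
case/andP=> _ /eqP dY; apply: contraTneq (ltnSn (\dim Y)) => eY.
rewrite -leqNgt dY dimvS // -(span_basis (vbasisP T)); apply/span_subvP => b /(nthP 0)[i].
rewrite size_tuple => ilt <-; have /ffunP/(_ (Ordinal ilt)) := eY; by rewrite !ffunE.
Qed.

Lemma card_basis_patterns T :
  #|predC1 ([ffun=> true] : {ffun 'I_(\dim T) -> bool})| = (2 ^ \dim T).-1.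
Proof. by rewrite cardC1 card_ffun card_bool card_ord. Qed.

Section HyperplaneFamily.
Variables (T : {vspace vT}) (S : seq {vspace vT}).
Hypotheses (uniqS : uniq S) (hypS : {subset S <= hyperplane T}).

Let patterns := map (basis_pattern T) S.

Let card_patterns : #|patterns| = size S.
Proof.
rewrite (card_uniqP _) ?size_map // map_inj_in_uniq //.
by move=> X Y /hypS hX /hypS hY; apply: basis_pattern_inj.
Qed.

Let patterns_sub : patterns \subset predC1 [ffun=> true].
Proof. by apply/subsetP=> _ /mapP[X /hypS hX ->]; rewrite inE basis_pattern_neq_true. Qed.

Lemma size_hyperplanes : (size S <= (2 ^ \dim T).-1)%N.
Proof. by rewrite -card_patterns -card_basis_patterns subset_leq_card. Qed.

Lemma hyperplanes_full : ((2 ^ \dim T).-1 <= size S)%N -> {subset hyperplane T <= S}.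
Proof.
move=> sizeS Y hY.
have patternsE : patterns =i predC1 [ffun=> true].
  apply/subset_cardP; last exact: patterns_sub.
  by apply/anti_leq; rewrite card_patterns card_basis_patterns size_hyperplanes.
have /mapP[X XS eXY] : basis_pattern T Y \in patterns.
  by rewrite patternsE inE basis_pattern_neq_true.
by rewrite (basis_pattern_inj hY (hypS XS) eXY).
Qed.

End HyperplaneFamily.

End HyperplanesF2.

Section Codes.
Variables (F : fieldType) (vT : vectType F) (U : seq {vspace vT}).
Hypotheses (U0 : 0%VS \in U) (eqdU : equidistant U 2).

Lemma dS0v (X : {vspace vT}) : dS 0%VS X = \dim X.
Proof. by rewrite /dS cap0v dimv0 muln0 subn0. Qed.

Lemma dim_nontriv : {in nontriv U, forall X, \dim X = 2%N}.
Proof.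
move=> X; rewrite mem_filter => /andP[X0 XU].
by rewrite -dS0v eqdU // eq_sym.
Qed.

Lemma dim_cap_nontriv : {in nontriv U &, forall X Y, X != Y -> \dim (X :&: Y) = 1%N}.
Proof.
move=> X Y XS YS XY; have := eqdU (mem_subseq (filter_subseq _ _) XS).
move=> /(_ Y (mem_subseq (filter_subseq _ _) YS) XY).
by rewrite /dS (dim_nontriv XS) (dim_nontriv YS); lia.
Qed.

Lemma size_nontriv : uniq U -> size (nontriv U) = (size U).-1.
Proof. by move=> uU; rewrite /nontriv -rem_filter // size_rem. Qed.

End Codes.

Theorem proposition2 (n : nat) (U : seq {vspace 'rV['F_2]_n}) :
  (4 <= n)%N ->
  linear_code U ->
  equidistant U 2 ->
  size U = (2 ^ n.-1)%N ->
  sunflower (nontriv U) \/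
  (n = 4%N /\
   exists T : {vspace 'rV['F_2]_n},
     \dim T = 3%N /\
     forall Y : {vspace 'rV['F_2]_n},
       Y \in nontriv U <-> (\dim Y = 2%N /\ (Y <= T)%VS)).
Proof.
move=> n4 [uU [U0 _]] eqdU sizeU.
set S := nontriv U.
have uS : uniq S := filter_uniq _ uU.
have dimS := dim_nontriv U0 eqdU; have dim_capS := dim_cap_nontriv U0 eqdU.
have sizeS : size S = (2 ^ n.-1).-1 by rewrite size_nontriv ?sizeU.
have S7 : (7 <= size S)%N.
  have : (2 ^ 3 <= 2 ^ n.-1)%N by rewrite leq_exp2l //; lia.
  by rewrite sizeS; lia.
have [A [B [AS BS AB]]] : exists A B, [/\ A \in S, B \in S & A != B].
  exists (nth 0%VS S 0), (nth 0%VS S 1).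
  have S2 : (1 < size S)%N by apply: leq_trans S7.
  by split; rewrite ?mem_nth ?nth_uniq ?S2 ?(ltnW S2).
have [common|flat] := sunflowerS_or_subv_addv dimS dim_capS AS BS AB.
  by left; exists 2%N, 1%N, (A :&: B)%VS; split; rewrite ?dim_capS.
have dT := dim_addS dimS dim_capS AS BS AB.
have hypS : {subset S <= hyperplane (A + B)}.
  by move=> X XS; rewrite unfold_in /hyperplane flat // (dimS _ XS) dT.
have n_eq4 : n = 4%N.
  have := size_hyperplanes uS hypS; rewrite dT sizeS => le7.
  have : (2 ^ n.-1 <= 2 ^ 3)%N by have := expn_gt0 2 n.-1; lia.
  by rewrite leq_exp2l //; lia.
right; split=> //; exists (A + B)%VS; split=> // Y; split=> [YS|[dY YAB]].
  by rewrite (dimS _ YS) flat.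
apply: (hyperplanes_full uS hypS); first by rewrite dT sizeS n_eq4.
by rewrite unfold_in /hyperplane YAB dY dT.
Qed.
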